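(* For any formal power series $\tau({\bf t})$ in ${\bf t}=(t_1,t_2,\dots)$ and any $n\ge1$, \[ W_n(x_1,\dots,x_n)=[\epsilon_1\cdots\epsilon_n]\Big(K_n(x_1,\dots,x_n;x_1-\epsilon_1,\dots,x_n-\epsilon_n)\Big/\det\Big(\frac1{x_i-x_j+\epsilon_j}\Big)_{i,j}\Big), \] where $[\epsilon_1\cdots\epsilon_n]$ denotes extraction of the coefficient of $\epsilon_1\cdots\epsilon_n$.
   Context: $[x]=(x,x^2/2,x^3/3,\dots)$ and $\tau(\sum_i[x_i]-\sum_i[x'_i])$ means substituting $t_l=\sum_i(x_i^l-x_i'^l)/l$. $K_n(x_1,\dots,x_n;x'_1,\dots,x'_n)=\det\big(\frac1{x_i-x'_j}\big)_{i,j}\,\tau\big(\sum_i([x_i]-[x'_i])\big)$. $\nabla(x)=\sum_{i\ge1}x^{i-1}\partial/\partial t_i$ and $W_n(x_1,\dots,x_n)=\prod_{i=1}^n\nabla(x_i)\tau({\bf t})|_{{\bf t}=0}$. *)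

From HB Require Import structures.
From mathcomp Require Import all_boot all_order all_algebra.
From mathcomp Require Import mpoly.
Set Implicit Arguments. Unset Strict Implicit. Unset Printing Implicit Defensive.
Import Order.TTheory GRing.Theory.
Local Open Scope ring_scope.

(* Formal power series in infinitely many variables t = (t_1, t_2, ...).     *)
(* A multi-index is a function m : nat -> nat, where m k is the exponent of *)
(* t_(k+1) (0-based shift).  Only finitely supported multi-indices are ever *)
(* used; a power series is its coefficient function.                         *)
Definition multi_index := nat -> nat.
Definition fps (R : Type) := multi_index -> R.

Definition mi0 : multi_index := fun _ => 0%N.

Definition mi_incr (m : multi_index) (k : nat) : multi_index :=
  fun j => if j == k then (m j).+1 else m j.

Definition fps_deriv (R : nzRingType) (k : nat) (f : fps R) : fps R :=
  fun m => (m k).+1%:R * f (mi_incr m k).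

Definition fps_at0 (R : Type) (f : fps R) : R := f mi0.

(* W_n(x_1..x_n) = prod_i nabla(x_i) tau |_{t=0}, nabla(x) = sum_{i>=1}      *)
(* x^(i-1) d/dt_i.  Expanding the product, the coefficient of               *)
(* x_1^(a_1) ... x_n^(a_n) is  d/dt_(a_1+1) ... d/dt_(a_n+1) tau |_{t=0}.    *)
(* W_n is given as a power series in x via its coefficient function.         *)
Definition W (R : nzRingType) (n : nat) (tau : fps R) (a : 'X_{1..n}) : R :=
  fps_at0 (foldr (fun i f => fps_deriv (a i) f) tau (enum 'I_n)).

(* Polynomials in the 2n variables x_1..x_n, eps_1..eps_n:                   *)
(* variable lshift n i is x_(i+1), variable rshift n i is eps_(i+1).         *)
Definition xv (R : nzRingType) (n : nat) (i : 'I_n) : {mpoly R[n + n]} :=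
  'X_(lshift n i).
Definition ev (R : nzRingType) (n : nat) (i : 'I_n) : {mpoly R[n + n]} :=
  'X_(rshift n i).

(* The substituted value of t_l (l >= 1) in tau(sum_i [x_i] - [x'_i]) with   *)
(* x'_i = x_i - eps_i :  t_l = sum_i (x_i^l - (x_i - eps_i)^l) / l.          *)
Definition tsub (R : fieldType) (n : nat) (l : nat) : {mpoly R[n + n]} :=
  (l%:R)^-1 *: \sum_(i < n) (xv R i ^+ l - (xv R i - ev R i) ^+ l).

Definition mi_of_ffun (D : nat) (m : {ffun 'I_D -> 'I_D.+1}) : multi_index :=
  fun k => oapp (fun i : 'I_D => nat_of_ord (m i)) 0%N (insub k).

(* The power series G(x, eps) := tau(t_l := tsub l), given by its            *)
(* coefficient function on monomials mu in x, eps.  Since tsub l is          *)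
(* homogeneous of degree l (in particular has no monomial of degree < l),    *)
(* the monomial t^m contributes only to total degree sum_l l*m_l >= |m|;     *)
(* hence the coefficient of a monomial mu of total degree D only receives    *)
(* contributions from multi-indices supported in {t_1..t_D} with exponents   *)
(* <= D, and the (a priori infinite) sum defining the composition reduces    *)
(* to the finite sum below.                                                  *)
Definition tau_subst (R : fieldType) (n : nat) (tau : fps R)
    (mu : 'X_{1..n + n}) : R :=
  let D := mdeg mu in
  \sum_(m : {ffun 'I_D -> 'I_D.+1})
     tau (mi_of_ffun m) *
     (\prod_(k < D) tsub R n k.+1 ^+ (m k))@_mu.

Definition xa_eps (n : nat) (a : 'X_{1..n}) : 'X_{1..n + n} :=
  [multinom (match split i with inl j => a j | inr _ => 1%N end) | i < n + n].

From HB Require Import structures.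
From mathcomp Require Import all_boot all_order all_algebra.
From mathcomp Require Import mpoly ring.
From Stdlib Require Import FunctionalExtensionality.
Set Implicit Arguments. Unset Strict Implicit. Unset Printing Implicit Defensive.
Import Order.TTheory GRing.Theory.
Local Open Scope ring_scope.

(* Both sides equal m! * tau_m, where m is the multi-index counting how often
   each value occurs among a_1, ..., a_n and m! is the product of the
   factorials of its entries.  On the left this is just the value at t = 0 of
   the derivative d/dt_(a_1+1) ... d/dt_(a_n+1) tau.  On the right only
   monomials of degree at most one in each eps_i matter, and modulo eps_i^2
   the substitution is t_(k+1) = sum_i x_i^k eps_i (this uses characteristic
   0).  The coefficient of x^a eps_1 ... eps_n in prod_k (sum_i x_i^k eps_i)^F_k
   is found by differentiating in one eps_i at a time: it is m! if F = m and
   0 otherwise, so t^m is the only monomial of tau that contributes. *)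

Section FpsDerivatives.
Variable R : nzRingType.

Lemma mi_incrC (m : multi_index) k k' :
  mi_incr (mi_incr m k) k' = mi_incr (mi_incr m k') k.
Proof.
apply: functional_extensionality => j; rewrite /mi_incr.
by case: (j =P k) => [->|]; case: (k =P k') => [->|] //; case: (j =P k').
Qed.

Lemma fps_derivC k k' (f : fps R) :
  fps_deriv k (fps_deriv k' f) = fps_deriv k' (fps_deriv k f).
Proof.
apply: functional_extensionality => m; rewrite /fps_deriv.
have [->|nkk'] := eqVneq k k'; first by [].
rewrite mi_incrC /mi_incr (negbTE nkk') eq_sym (negbTE nkk').
by rewrite !mulrA -!natrM mulnC.
Qed.

Definition fps_derivs (s : seq nat) (f : fps R) : fps R :=
  foldr (@fps_deriv R) f s.

Lemma fps_derivs_cons k s f :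
  fps_derivs (k :: s) f = fps_derivs s (fps_deriv k f).
Proof. by elim: s f => [|k' s IH] f //=; rewrite -IH /= fps_derivC. Qed.

(* The product of the factorials of the multiplicities of the entries of [s]. *)
Fixpoint mult_fact (s : seq nat) : nat :=
  if s is k :: s' then ((count_mem k s').+1 * mult_fact s')%N else 1%N.

Definition count_mi (s : seq nat) : multi_index := fun k => count_mem k s.

Lemma mi_incr_count k s : mi_incr (count_mi s) k = count_mi (k :: s).
Proof.
apply: functional_extensionality => j; rewrite /mi_incr /count_mi /=.
by case: (j =P k) => [->|/eqP]; rewrite ?eqxx // eq_sym => /negbTE ->.
Qed.

Lemma fps_derivs_at0 s f :
  fps_at0 (fps_derivs s f) = (mult_fact s)%:R * f (count_mi s).
Proof.
elim: s f => [|k s IH] f; first by rewrite mul1r.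
rewrite fps_derivs_cons IH /fps_deriv mi_incr_count.
by rewrite mulrA -natrM mulnC.
Qed.

End FpsDerivatives.

Lemma WE (R : nzRingType) n (tau : fps R) (a : 'X_{1..n}) :
  W tau a = (mult_fact (map a (enum 'I_n)))%:R * tau (count_mi (map a (enum 'I_n))).
Proof. by rewrite /W -(foldr_map a (@fps_deriv R)) fps_derivs_at0. Qed.

Section CoefEqOn.
Variables (R : comNzRingType) (N : nat) (O : pred 'X_{1..N}).
Hypothesis O_down : forall m1 m2, O (m1 + m2)%MM -> O m1.

Definition coef_eq_on (p q : {mpoly R[N]}) := forall mu, O mu -> p@_mu = q@_mu.

Lemma coef_eq_onM p p' q q' :
  coef_eq_on p q -> coef_eq_on p' q' -> coef_eq_on (p * p') (q * q').
Proof.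
move=> hp hp' mu Omu; rewrite !mcoeffM; apply: eq_bigr => k /eqP mu_k.
have Ok : O (k.1 + k.2)%MM by rewrite -mu_k.
by rewrite hp ?hp' //; [apply: (O_down (m2 := k.1)); rewrite addmC | apply: O_down Ok].
Qed.

Lemma coef_eq_on_prod (I : Type) (r : seq I) (F G : I -> {mpoly R[N]}) :
  (forall i, coef_eq_on (F i) (G i)) ->
  coef_eq_on (\prod_(i <- r) F i) (\prod_(i <- r) G i).
Proof. by move=> FG; apply: (big_ind2 coef_eq_on) => // *; apply: coef_eq_onM. Qed.

Lemma coef_eq_on_exp p q e : coef_eq_on p q -> coef_eq_on (p ^+ e) (q ^+ e).
Proof.
by move=> pq; rewrite -[e]card_ord -!prodr_const; apply: coef_eq_on_prod.
Qed.

End CoefEqOn.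

Section Guards.
Variables (R : comNzRingType) (N : nat) (w u : 'I_N).

Definition guards (p : {mpoly R[N]}) :=
  forall r : 'X_{1..N}, r w = 0%N -> (0 < r u)%N -> p@_r = 0.

Lemma guards1 : guards 1.
Proof.
move=> r _ ru; rewrite mcoeff1; case: eqP => // r0.
by move: ru; rewrite r0 mnm0E.
Qed.

Lemma guardsM p q : guards p -> guards q -> guards (p * q).
Proof.
move=> hp hq r rw ru; rewrite mcoeffM big1 // => k /eqP r_k.
have : (k.1 + k.2)%MM w = 0%N by rewrite -r_k.
have : (0 < (k.1 + k.2)%MM u)%N by rewrite -r_k.
rewrite !mnmDE addn_gt0 => /orP u12 /eqP; rewrite addn_eq0 => /andP[/eqP w1 /eqP w2].
by case: u12 => [u1|u2]; [rewrite hp ?mul0r | rewrite hq ?mulr0].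
Qed.

Lemma guards_prod (I : Type) (r : seq I) (F : I -> {mpoly R[N]}) :
  (forall i, guards (F i)) -> guards (\prod_(i <- r) F i).
Proof. by move=> hF; apply: (big_ind guards); [exact: guards1 | exact: guardsM |]. Qed.

Lemma guards_exp p e : guards p -> guards (p ^+ e).
Proof. by move=> hp; rewrite -[e]card_ord -prodr_const; apply: guards_prod. Qed.

End Guards.

Section MpolyFacts.
Variables (R : comNzRingType) (N : nat).
Implicit Types (p : {mpoly R[N]}) (m mu : 'X_{1..N}).

Lemma mcoeffMX_eq0 p m mu : ~~ (m <= mu)%MM -> (p * 'X_[m])@_mu = 0.
Proof.
move=> m_mu; apply/eqP; rewrite mcoeff_eq0 (perm_mem (msuppMX p m)).
by apply: contra m_mu => /mapP[m' _ ->]; rewrite lem_addr.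
Qed.

Lemma mderiv_exp (i : 'I_N) p e : (p ^+ e)^`M(i) = (p^`M(i) * p ^+ e.-1) *+ e.
Proof.
elim: e => [|e IH]; first by rewrite expr0 -mpolyC1 mderivC mulr0n.
rewrite exprS mderivM IH; case: e {IH} => [|e] /=; first by rewrite !mulr0n mulr0 addr0.
by rewrite mulrnAr mulrCA -exprS [in RHS]mulrS.
Qed.

End MpolyFacts.

Section LinearPart.
Variables (R : comNzRingType) (n : nat).

Definition tlin (k : nat) : {mpoly R[n + n]} := \sum_(j < n) xv R j ^+ k * ev R j.

Lemma tlinE k :
  tlin k = \sum_(j < n) 'X_[U_(lshift n j) *+ k + U_(rshift n j)].
Proof. by apply: eq_bigr => j _; rewrite mpolyXD mpolyXn. Qed.

Lemma mderiv_tlin i k : (tlin k)^`M(rshift n i) = 'X_[U_(lshift n i) *+ k].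
Proof.
rewrite tlinE raddf_sum (bigD1 i) //= big1 ?addr0 => [|j ji];
  rewrite mderivX mnmDE mulmnE !mnm1E eq_lrshift mul0n add0n.
  by rewrite eqxx scale1r addmK.
by rewrite eq_rshift (negbTE ji) scale0r.
Qed.

Definition tlin_prod B (F : multi_index) : {mpoly R[n + n]} :=
  \prod_(k < B) tlin k ^+ F k.

Definition mi_decr (F : multi_index) k : multi_index :=
  fun j => if j == k then (F j).-1 else F j.

Lemma tlin_prodS B F : tlin_prod B.+1 F = tlin_prod B F * tlin B ^+ F B.
Proof. exact: big_ord_recr. Qed.

Lemma mderiv_tlin_prod i B F :
  (tlin_prod B F)^`M(rshift n i) =
  \sum_(k < B) ('X_[U_(lshift n i) *+ k] * tlin_prod B (mi_decr F k)) *+ F k.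
Proof.
elim: B => [|B IH]; first by rewrite /tlin_prod !big_ord0 -mpolyC1 mderivC.
rewrite tlin_prodS mderivM IH mderiv_exp mderiv_tlin big_ord_recr /=.
have decr_lt (k : 'I_B) : mi_decr F k B = F B.
  by rewrite /mi_decr gtn_eqF.
have decr_B : tlin_prod B (mi_decr F B) = tlin_prod B F.
  by apply: eq_bigr => k _; rewrite /mi_decr ltn_eqF.
rewrite tlin_prodS decr_B {3}/mi_decr eqxx mulr_suml.
under [in RHS]eq_bigr do rewrite tlin_prodS decr_lt.
congr (_ + _); first by apply: eq_bigr => k _; rewrite mulrnAl mulrA.
by rewrite mulrnAr mulrCA mulrA.
Qed.

Lemma guards_tlin_prod i B F : guards (rshift n i) (lshift n i) (tlin_prod B F).
Proof.
apply: guards_prod => k; apply: guards_exp => r r_eps r_x.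
rewrite tlinE raddf_sum big1 //= => j _; rewrite mcoeffX.
case: eqP => // jr; move: r_eps r_x; rewrite -jr !mnmDE !mulmnE !mnm1E.
by rewrite eq_lrshift eq_rlshift eq_rshift eq_lshift; case: (j == i); rewrite ?muln0.
Qed.

Lemma tlin_prod_coef0 B F :
  (tlin_prod B F)@_0 = [forall k : 'I_B, F k == 0%N]%:R.
Proof.
have zero_down (m1 m2 : 'X_{1..n + n}) : (m1 + m2 == 0)%MM -> (m1 == 0)%MM.
  by rewrite mnmD_eq0 => /andP[].
have tlin_coef0 k : coef_eq_on (pred1 0%MM) (tlin k) 0.
  move=> m /eqP ->; rewrite mcoeff0 tlinE raddf_sum big1 //= => j _.
  rewrite mcoeffX; case: eqP => // /mnmP /(_ (rshift n j)).
  by rewrite mnmDE mulmnE !mnm1E eqxx eq_lrshift mnm0E.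
rewrite (@coef_eq_on_prod _ _ _ zero_down _ _ _ (fun k : 'I_B => 0 ^+ F k)) //;
  last first.
  by move=> k; apply: coef_eq_on_exp.
have [/forallP F0|] := boolP [forall k : 'I_B, F k == 0%N].
  by rewrite big1 ?mcoeff1 ?eqxx // => k _; rewrite (eqP (F0 k)) expr0.
rewrite negb_forall => /existsP[k Fk].
by rewrite (bigD1 k) //= expr0n (negbTE Fk) mul0r mcoeff0.
Qed.

End LinearPart.

Lemma mi_decr_count B F k0 l : (k0 < B)%N ->
  (F k0 * [forall k : 'I_B, mi_decr F k0 k == count_mi l k])%N =
  ([forall k : 'I_B, F k == count_mi (k0 :: l) k] * (count_mem k0 l).+1)%N.
Proof.
move=> k0_B.
have count_cons k : count_mi (k0 :: l) k = ((k0 == k) + count_mi l k)%N by [].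
have [F0|F0] := eqVneq (F k0) 0%N.
  rewrite F0 mul0n; case: forallP => // /(_ (Ordinal k0_B)) /eqP.
  by rewrite count_cons /= F0 eqxx.
have decrE k : (mi_decr F k0 k == count_mi l k) = (F k == count_mi (k0 :: l) k).
  rewrite /mi_decr count_cons (eq_sym k0); have [->|//] := eqVneq k k0.
  by case: (F k0) F0 => // f _; rewrite add1n eqSS.
rewrite (eq_forallb (fun k : 'I_B => decrE k)).
case: forallP => [/(_ (Ordinal k0_B)) /eqP -> /=|_]; last by rewrite muln0.
by rewrite eqxx muln1 mul1n.
Qed.

Section CoefTlinProd.
Variables (R : comNzRingType) (n : nat) (a : 'X_{1..n}) (B : nat).

Definition xa_eps_on (s : seq 'I_n) : 'X_{1..n + n} :=
  (\sum_(i <- s) (U_(lshift n i) *+ a i + U_(rshift n i)))%MM.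

Lemma xa_eps_on_lshift s j : j \notin s -> xa_eps_on s (lshift n j) = 0%N.
Proof.
move=> j_s; rewrite /xa_eps_on mnm_sumE big1_seq // => i /andP[_ i_s].
rewrite mnmDE mulmnE !mnm1E eq_lshift eq_rlshift addn0.
by case: eqP i_s j_s => // -> ->.
Qed.

Lemma xa_eps_on_rshift s j : j \notin s -> xa_eps_on s (rshift n j) = 0%N.
Proof.
move=> j_s; rewrite /xa_eps_on mnm_sumE big1_seq // => i /andP[_ i_s].
rewrite mnmDE mulmnE !mnm1E eq_rshift eq_lrshift mul0n.
by case: eqP i_s j_s => // -> ->.
Qed.

Lemma coef_xpow_tlin_prod i s k G : i \notin s ->
  ('X_[U_(lshift n i) *+ k] * tlin_prod R n B G)
    @_(U_(lshift n i) *+ a i + xa_eps_on s) =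
  (k == a i)%:R * (tlin_prod R n B G)@_(xa_eps_on s).
Proof.
move=> i_s; rewrite mulrC; case: (ltngtP k (a i)) => [k_lt|k_gt|->].
- have -> : (U_(lshift n i) *+ a i + xa_eps_on s =
             U_(lshift n i) *+ k + (U_(lshift n i) *+ (a i - k) + xa_eps_on s))%MM.
    by apply/mnmP => t; rewrite !mnmDE !mulmnE addnA -mulnDr subnKC // ltnW.
  rewrite mcoeffMX mul0r; apply: (@guards_tlin_prod R n i).
    by rewrite mnmDE mulmnE mnm1E eq_lrshift xa_eps_on_rshift.
  by rewrite mnmDE mulmnE mnm1E eqxx xa_eps_on_lshift // mul1n addn0 subn_gt0.
- rewrite mul0r mcoeffMX_eq0 //; apply/mnm_lepP => /(_ (lshift n i)).
  rewrite mnmDE !mulmnE mnm1E eqxx xa_eps_on_lshift // !mul1n addn0.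
  by rewrite leqNgt k_gt.
- by rewrite mcoeffMX mul1r.
Qed.

Lemma coef_tlin_prod s F : uniq s -> (forall i, i \in s -> a i < B)%N ->
  (tlin_prod R n B F)@_(xa_eps_on s) =
  [forall k : 'I_B, F k == count_mi (map a s) k]%:R * (mult_fact (map a s))%:R.
Proof.
elim: s F => [|i s IH] F.
  by rewrite /xa_eps_on big_nil tlin_prod_coef0 mulr1.
rewrite cons_uniq => /andP[i_s s_uniq] a_lt.
have a_i : (a i < B)%N by apply: a_lt; rewrite mem_head.
set mu := (U_(lshift n i) *+ a i + xa_eps_on s)%MM.
have mu_eps : mu (rshift n i) = 0%N.
  by rewrite mnmDE mulmnE mnm1E eq_lrshift xa_eps_on_rshift.
have -> : xa_eps_on (i :: s) = (mu + U_(rshift n i))%MM.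
  by apply/mnmP => t; rewrite /xa_eps_on big_cons !mnmDE addnAC.
(* mu has no eps_i, so the coefficient at mu * eps_i is read off the eps_i-derivative *)
have := mcoeff_deriv (rshift n i) mu (tlin_prod R n B F).
rewrite mu_eps mulr1n => <-; rewrite mderiv_tlin_prod raddf_sum /=.
rewrite (bigD1 (Ordinal a_i)) //= big1 ?addr0 => [|k /eqP k_ai]; last first.
  rewrite mcoeffMn coef_xpow_tlin_prod // (_ : (k == a i :> nat) = false).
    by rewrite mul0r mul0rn.
  by apply/eqP => k_eq; apply: k_ai; apply: val_inj.
rewrite mcoeffMn coef_xpow_tlin_prod // eqxx mul1r IH // => [|j j_s]; last first.
  by apply: a_lt; rewrite inE j_s orbT.
by rewrite -[_ *+ F (a i)]mulr_natl mulrA -natrM mi_decr_count // natrM -mulrA -natrM.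
Qed.

End CoefTlinProd.

Lemma exprB_sqr_rem (R : comNzRingType) (x y : R) m :
  exists q, x ^+ m.+1 - (x - y) ^+ m.+1 = (x ^+ m * y) *+ m.+1 - y ^+ 2 * q.
Proof.
elim: m => [|m [q hq]].
  by exists 0; rewrite !expr1 subKr expr0 mul1r mulr0 subr0.
exists (x * q + x ^+ m *+ m.+1 - y * q).
have -> : (x - y) ^+ m.+2 = (x ^+ m.+1 - ((x ^+ m * y) *+ m.+1 - y ^+ 2 * q)) * (x - y).
  by rewrite -hq subKr exprSr.
by rewrite !exprS; ring.
Qed.

Section TsubLinearPart.
Variables (R : fieldType) (n : nat).
Hypothesis R_char0 : [pchar R] =i pred0.

Definition eps_sqfree (mu : 'X_{1..n + n}) := [forall j : 'I_n, mu (rshift n j) <= 1]%N.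

Lemma eps_sqfree_down m1 m2 : eps_sqfree (m1 + m2)%MM -> eps_sqfree m1.
Proof.
move=> /forallP sqfree12; apply/forallP => j.
by apply: leq_trans (sqfree12 j); rewrite mnmDE leq_addr.
Qed.

Lemma coef_eq_on_tsub k : coef_eq_on eps_sqfree (tsub R n k.+1) (tlin R n k).
Proof.
move=> mu /forallP mu_sqfree.
rewrite /tsub mcoeffZ !raddf_sum mulr_sumr; apply: eq_bigr => j _ /=.
have [q ->] := exprB_sqr_rem (xv R j) (ev R j) k.
rewrite mcoeffB mcoeffMn [ev R j ^+ 2 * q]mulrC /ev mpolyXn (mcoeffMX_eq0 q);
  last first.
  apply/mnm_lepP => /(_ (rshift n j)); rewrite mulmnE mnm1E eqxx.
  by apply/negP; rewrite -ltnNge (leq_ltn_trans (mu_sqfree j)).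
rewrite subr0 mulrnAr -mulrnAl -mulr_natr mulVf ?mul1r //.
by move: R_char0 => /pcharf0P ->.
Qed.

End TsubLinearPart.

Lemma split_lshift m n (j : 'I_m) : split (lshift n j) = inl j.
Proof. exact: (unsplitK (inl _ j)). Qed.

Lemma split_rshift m n (j : 'I_n) : split (rshift m j) = inr j.
Proof. exact: (unsplitK (inr _ j)). Qed.

Section XaEps.
Variables (n : nat) (a : 'X_{1..n}).

Lemma xa_epsE : xa_eps a = xa_eps_on a (enum 'I_n).
Proof.
apply/mnmP => t; rewrite /xa_eps mnmE -(splitK t) /xa_eps_on mnm_sumE.
case: (split t) => j /=; rewrite ?split_lshift ?split_rshift.
  rewrite (bigD1_seq j) ?mem_enum ?enum_uniq //= big1_seq => [|i /andP[ij _]].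
    by rewrite mnmDE mulmnE !mnm1E eqxx eq_rlshift mul1n !addn0.
  by rewrite mnmDE mulmnE !mnm1E eq_lshift eq_rlshift (negbTE ij).
rewrite (bigD1_seq j) ?mem_enum ?enum_uniq //= big1_seq => [|i /andP[ij _]].
  by rewrite mnmDE mulmnE !mnm1E eqxx eq_lrshift !addn0.
by rewrite mnmDE mulmnE !mnm1E eq_rshift eq_lrshift (negbTE ij).
Qed.

Lemma mdeg_xa_eps : mdeg (xa_eps a) = (\sum_(j < n) a j + n)%N.
Proof.
rewrite mdegE big_split_ord /=; congr (_ + _)%N.
  by apply: eq_bigr => j _; rewrite /xa_eps mnmE split_lshift.
rewrite -[n in RHS]card_ord -sum1_card.
by apply: eq_bigr => j _; rewrite /xa_eps mnmE split_rshift.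
Qed.

Lemma eps_sqfree_xa_eps : eps_sqfree (xa_eps a).
Proof. by apply/forallP => j; rewrite /xa_eps mnmE split_rshift. Qed.

End XaEps.

Lemma mi_of_ffunE D (m : {ffun 'I_D -> 'I_D.+1}) (k : 'I_D) : mi_of_ffun m k = m k.
Proof. by rewrite /mi_of_ffun valK. Qed.

Lemma sum_ffun_indicator (R : nzRingType) D (c : multi_index) (G : multi_index -> R) :
  (forall k, c k <= D)%N -> (forall k, D <= k -> c k = 0)%N ->
  \sum_(m : {ffun 'I_D -> 'I_D.+1})
     G (mi_of_ffun m) * [forall k : 'I_D, mi_of_ffun m k == c k]%:R = G c.
Proof.
move=> c_le c_ge; pose m0 : {ffun 'I_D -> 'I_D.+1} := [ffun k : 'I_D => inord (c k)].
have m0E (k : 'I_D) : mi_of_ffun m0 k = c k by rewrite mi_of_ffunE ffunE inordK ?ltnS.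
rewrite (bigD1 m0) //= big1 ?addr0 => [|m m_m0].
  have -> : mi_of_ffun m0 = c.
    apply: functional_extensionality => t; case: (ltnP t D) => [tD|Dt].
      exact: (m0E (Ordinal tD)).
    by rewrite /mi_of_ffun insubN ?c_ge // -leqNgt.
  by rewrite (_ : [forall k : 'I_D, c k == c k]) ?mulr1 //; apply/forallP.
case: forallP => [m_c|_]; last by rewrite mulr0.
case/eqP: m_m0; apply/ffunP => k; apply: val_inj.
by rewrite /= -!mi_of_ffunE m0E; apply/eqP/m_c.
Qed.

Lemma coef_tsub_prod (R : fieldType) (R_char0 : [pchar R] =i pred0)
    n (a : 'X_{1..n}) D (m : {ffun 'I_D -> 'I_D.+1}) :
  (forall i, a i < D)%N ->
  (\prod_(k < D) tsub R n k.+1 ^+ m k)@_(xa_eps a) =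
  [forall k : 'I_D, mi_of_ffun m k == count_mi (map a (enum 'I_n)) k]%:R *
  (mult_fact (map a (enum 'I_n)))%:R.
Proof.
move=> a_lt; rewrite (@coef_eq_on_prod _ _ _ (@eps_sqfree_down n) _ _ _
  (fun k : 'I_D => tlin R n k ^+ mi_of_ffun m k)); last exact: eps_sqfree_xa_eps.
  by rewrite xa_epsE coef_tlin_prod ?enum_uniq.
move=> k; rewrite mi_of_ffunE.
exact/(coef_eq_on_exp (@eps_sqfree_down n))/coef_eq_on_tsub.
Qed.

Theorem proposition4p10 (R : fieldType) (hR : [pchar R] =i pred0)
    (n : nat) (hn : (0 < n)%N) (tau : fps R) (a : 'X_{1..n}) :
  W tau a = tau_subst tau (xa_eps a).
Proof.
set s := map a (enum 'I_n); set D := mdeg (xa_eps a).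
have a_lt i : (a i < D)%N.
  rewrite /D mdeg_xa_eps (bigD1 i) //= -addnA -{1}[a i]addn0 ltn_add2l.
  by rewrite addn_gt0 hn orbT.
have count_le k : (count_mi s k <= D)%N.
  apply: leq_trans (count_size _ _) _.
  by rewrite size_map size_enum_ord /D mdeg_xa_eps leq_addl.
have count_ge k : (D <= k)%N -> count_mi s k = 0%N.
  move=> Dk; apply/count_memPn/mapP => -[i _ ki].
  by move: (a_lt i); rewrite -ki ltnNge Dk.
rewrite WE /tau_subst -/D.
under eq_bigr do rewrite coef_tsub_prod // mulrA.
by rewrite -big_distrl /= sum_ffun_indicator // mulrC.
Qed.
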